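(* In the setting described in the context, let $i\in\mathcal V$ satisfy $\sigma_i^2\ge\sigma_j^2$ for every $j\in\mathcal V$, and let $z_{-i}=(z_j)_{j\ne i}$ be such that $\mathcal S(z_{-i})=\{j\ne i: z_j=1\}\ne\emptyset$. Then the following are equivalent: (i) $1\in\mathcal B_i(z_{-i})$; (ii) $\mathcal B_i(z_{-i})=[0,1]$; (iii) for every $z_i\in[0,1)$, writing $z=(z_i,z_{-i})$, there is exactly one node $j\in\mathcal S(z_{-i})$ reachable from $i$ (i.e. to which there is a path from $i$) in the graph $\mathcal G_{W(z)}$, and for this node $\sigma_i^2=\sigma_j^2$.
   Context: Let $n\ge2$ and $\mathcal V=\{1,\dots,n\}$. For a nonnegative $n\times n$ matrix $M$, $\mathcal G_M$ is the directed graph on $\mathcal V$ with edge $(k,l)$ iff $M_{kl}>0$. Let $P$ be a row-stochastic, irreducible, aperiodic matrix ($\mathcal G_P$ strongly connected with gcd of cycle lengths $1$). For $z\in[0,1]^n$, $W(z)=(I-[z])P+[z]$ ($[z]$ the diagonal matrix with diagonal $z$) and $H(z)=\lim_{t\to\infty}W(z)^t$ (the limit exists and is row-stochastic). Let $\sigma_1^2,\dots,\sigma_n^2>0$. Agent $i$'s cost is $\upsilon_i(z)=\sum_jH_{ij}(z)^2\sigma_j^2$, written $\upsilon_i(z_i,z_{-i})$, and her best response set is $\mathcal B_i(z_{-i})=\arg\min_{z_i\in[0,1]}\upsilon_i(z_i,z_{-i})$. *)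

From HB Require Import structures.
From mathcomp Require Import all_boot all_order all_algebra.
From mathcomp Require Import all_classical all_reals topology normedtype sequences.
Set Implicit Arguments. Unset Strict Implicit. Unset Printing Implicit Defensive.
Import Order.TTheory GRing.Theory Num.Theory numFieldNormedType.Exports.
Local Open Scope ring_scope.

Section Defs.
Variable R : realType.
Variable n : nat.

Definition graph_of (M : 'M[R]_n) : rel 'I_n := fun k l => 0 < M k l.

Fixpoint walk (e : rel 'I_n) (k l : 'I_n) (m : nat) : bool :=
  match m with
  | 0 => k == l
  | m'.+1 => [exists j, e k j && walk e j l m']
  end.

Definition row_stochastic (P : 'M[R]_n) : Prop :=
  (forall k l, 0 <= P k l) /\ (forall k, \sum_l P k l = 1).

Definition irreducible (P : 'M[R]_n) : Prop :=
  forall k l, connect (graph_of P) k l.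

(* gcd of cycle lengths is 1: the only common divisor of all
   lengths of closed walks (cycles) is 1 *)
Definition aperiodic (P : 'M[R]_n) : Prop :=
  forall d : nat,
    (forall (m : nat) (k : 'I_n), (0 < m)%N -> walk (graph_of P) k k m -> (d %| m)%N) ->
    d = 1%N.

Definition diagz (z : 'I_n -> R) : 'M[R]_n := diag_mx (\row_j z j).

Definition Wm (P : 'M[R]_n) (z : 'I_n -> R) : 'M[R]_n :=
  (1%:M - diagz z) *m P + diagz z.

Definition mxpow (A : 'M[R]_n) (t : nat) : 'M[R]_n := iter t (fun B => B *m A) 1%:M.

Definition Hm (P : 'M[R]_n) (z : 'I_n -> R) : 'M[R]_n :=
  \matrix_(k, l) limn (fun t => mxpow (Wm P z) t k l).

Definition upsilon (P : 'M[R]_n) (s2 : 'I_n -> R) (i : 'I_n) (z : 'I_n -> R) : R :=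
  \sum_j (Hm P z i j) ^+ 2 * s2 j.

(* (x, z_{-i}) : replace coordinate i of z by x *)
Definition upd (z : 'I_n -> R) (i : 'I_n) (x : R) : 'I_n -> R :=
  fun j => if j == i then x else z j.

(* best response set B_i(z_{-i}) (depends only on z_{-i}) *)
Definition best_resp (P : 'M[R]_n) (s2 : 'I_n -> R) (i : 'I_n) (z : 'I_n -> R) : set R :=
  [set x | 0 <= x <= 1 /\
     forall y, 0 <= y <= 1 -> upsilon P s2 i (upd z i x) <= upsilon P s2 i (upd z i y)].

Definition Sset (z : 'I_n -> R) (i : 'I_n) (j : 'I_n) : Prop := j != i /\ z j = 1.

End Defs.

From HB Require Import structures.
From mathcomp Require Import all_boot all_order all_algebra.
From mathcomp Require Import all_classical all_reals topology normedtype sequences.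
From mathcomp Require Import lra.
Import Order.TTheory GRing.Theory Num.Theory numFieldNormedType.Exports.
Local Open Scope ring_scope.
Local Open Scope classical_set_scope.
Set Implicit Arguments. Unset Strict Implicit.

(* For z_i < 1, W(z) is a stochastic matrix whose absorbing states are the
   agents with z_j = 1; they include S(z_{-i}) <> {} and exclude i, and by
   irreducibility of P every state reaches one of them.  The mass that has
   not been absorbed then decays geometrically, so W(z)^t converges (without
   any use of aperiodicity) and row i of H(z) is a probability vector whose
   support is exactly the set of nodes of S(z_{-i}) reachable from i.  For
   z_i = 1, agent i is itself absorbing and v_i = sigma_i^2.  Since
   H_ij^2 sigma_j^2 <= H_ij sigma_i^2, always v_i(z) <= sigma_i^2, with
   equality iff row i of H(z) is a point mass on some j with
   sigma_j^2 = sigma_i^2.  Hence z_i = 1 is a best response iff every z_i is,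
   iff this point-mass condition holds for all z_i < 1, which is (iii). *)

Lemma psumr_gt0_exists (R : realDomainType) (I : finType) (F : I -> R) :
  0 < \sum_i F i -> exists i, 0 < F i.
Proof.
apply: contraPP => /forallNP noF; apply/negP; rewrite -leNgt.
by apply: sumr_le0 => i _; rewrite leNgt; apply/negP/noF.
Qed.

Section MatrixPowers.
Variables (R : realType) (n : nat) (W : 'M[R]_n).

Local Notation Wp := (mxpow W).

Lemma mxpowS t : Wp t.+1 = Wp t *m W.
Proof. by []. Qed.

Lemma mxpowD s t : Wp (s + t) = Wp s *m Wp t.
Proof.
elim: t => [|t IH]; first by rewrite addn0 mulmx1.
by rewrite addnS !mxpowS IH mulmxA.
Qed.

Lemma mxpowSl t : Wp t.+1 = W *m Wp t.
Proof. by rewrite -add1n mxpowD mxpowS mul1mx. Qed.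

Hypothesis W_ge0 : forall k l, 0 <= W k l.
Hypothesis W_row_sum1 : forall k, \sum_l W k l = 1.

Lemma mxpow_ge0 t k l : 0 <= Wp t k l.
Proof.
elim: t k l => [|t IH] k l; first by rewrite mxE ler0n.
by rewrite mxpowS mxE; apply: sumr_ge0 => q _; apply: mulr_ge0.
Qed.

Lemma mxpow_row_sum1 t k : \sum_l Wp t k l = 1.
Proof.
elim: t k => [|t IH] k.
  rewrite (bigD1 k) //= mxE eqxx big1 ?addr0 // => l /negPf kl.
  by rewrite mxE eq_sym kl.
rewrite mxpowS; under eq_bigr do rewrite mxE.
by rewrite exchange_big /=; under eq_bigr do rewrite -mulr_sumr W_row_sum1 mulr1.
Qed.

Lemma mxpow_le1 t k l : Wp t k l <= 1.
Proof.
rewrite -(mxpow_row_sum1 t k) (bigD1 l) //= lerDl.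
by apply: sumr_ge0 => q _; apply: mxpow_ge0.
Qed.

Lemma connect_mxpow_gt0 k l : connect (graph_of W) k l <-> exists t, 0 < Wp t k l.
Proof.
split.
  move=> /connectP [p kp ->]; elim: p k kp => [|q p IH] k /=.
    by move=> _; exists 0%N; rewrite mxE eqxx ltr01.
  move=> /andP [kq qp]; have [t qt] := IH _ qp.
  exists t.+1; rewrite mxpowSl mxE (bigD1 q) //= ltr_pwDl ?mulr_gt0 //.
  by apply: sumr_ge0 => r _; apply: mulr_ge0 (W_ge0 _ _) (mxpow_ge0 _ _ _).
case=> t; elim: t l => [|t IH] l.
  by rewrite mxE; case: eqP => [->|]; rewrite ?connect0 ?ltxx.
rewrite mxpowS mxE => /psumr_gt0_exists [q kql].
have [kq_neq0 ql_neq0] : Wp t k q != 0 /\ W q l != 0.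
  by apply/norP; rewrite -mulf_eq0 gt_eqF.
apply: connect_trans (IH q _) (connect1 _).
  by rewrite lt_def kq_neq0 mxpow_ge0.
by rewrite /graph_of lt_def ql_neq0 W_ge0.
Qed.

Variable A : pred 'I_n.
Hypothesis W_absorbing : forall a l, A a -> W a l = (a == l)%:R.

Lemma mxpow_absorbing t a l : A a -> Wp t a l = (a == l)%:R.
Proof.
move=> Aa; elim: t l => [|t IH] l; first by rewrite mxE.
rewrite mxpowS mxE (bigD1 a) //= IH eqxx mul1r W_absorbing // big1 ?addr0 // => q.
by rewrite IH eq_sym => /negPf ->; rewrite mul0r.
Qed.

Lemma mxpow_absorbing_nondecr k a : A a -> nondecreasing_seq (fun t => Wp t k a).
Proof.
move=> Aa; apply/nondecreasing_seqP => t.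
rewrite mxpowS mxE (bigD1 a) //= W_absorbing // eqxx mulr1 lerDl.
by apply: sumr_ge0 => q _; apply: mulr_ge0 (mxpow_ge0 _ _ _) (W_ge0 _ _).
Qed.

Definition transient_mass t k := \sum_(l | ~~ A l) Wp t k l.

Lemma transient_mass_ge0 t k : 0 <= transient_mass t k.
Proof. by apply: sumr_ge0 => l _; apply: mxpow_ge0. Qed.

Lemma transient_mass_le1 t k : transient_mass t k <= 1.
Proof.
rewrite -(mxpow_row_sum1 t k) (bigID A) /= lerDr.
by apply: sumr_ge0 => l _; apply: mxpow_ge0.
Qed.

Lemma transient_mass_absorbing t a : A a -> transient_mass t a = 0.
Proof.
move=> Aa; apply: big1 => l Al; rewrite mxpow_absorbing //.
by case: eqP Al => // <-; rewrite Aa.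
Qed.

Lemma transient_mass_add s t k :
  transient_mass (s + t) k = \sum_(q | ~~ A q) Wp s k q * transient_mass t q.
Proof.
rewrite /transient_mass; under eq_bigr do rewrite mxpowD mxE.
rewrite exchange_big (bigID A) /= big1 ?add0r => [|q Aq].
  by apply: eq_bigr => q _; rewrite mulr_sumr.
by rewrite -mulr_sumr -/(transient_mass t q) transient_mass_absorbing ?mulr0.
Qed.

Lemma transient_mass_nonincr k : nonincreasing_seq (fun t => transient_mass t k).
Proof.
apply/nonincreasing_seqP => t; rewrite -addn1 transient_mass_add.
apply: ler_sum => q _; apply: ler_piMr (mxpow_ge0 _ _ _) (transient_mass_le1 _ _).
Qed.

Hypothesis reach_absorbing : forall k, exists2 a, A a & connect (graph_of W) k a.

Lemma transient_mass_lt1 : exists N, forall k, transient_mass N k < 1.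
Proof.
have [f fP] : {f : 'I_n -> nat & forall k, exists2 a, A a & 0 < Wp (f k) k a}.
  apply: (@choice _ _ (fun k t => exists2 a, A a & 0 < Wp t k a)) => k.
  have [a Aa /connect_mxpow_gt0 [t kat]] := reach_absorbing k.
  by exists t, a.
exists (\max_k f k)%N => k; have [a Aa kat] := fP k.
have kaN : 0 < Wp (\max_k f k) k a.
  exact: lt_le_trans kat (mxpow_absorbing_nondecr k Aa (leq_bigmax k)).
have := mxpow_row_sum1 (\max_k f k) k; rewrite (bigID A) /= (bigD1 a Aa) /=.
have : 0 <= \sum_(l | A l && (l != a)) Wp (\max_k f k) k l.
  by apply: sumr_ge0 => l _; apply: mxpow_ge0.
rewrite /transient_mass; lra.
Qed.

Lemma transient_mass_cvg0 k : (fun t => transient_mass t k) @ \oo --> 0.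
Proof.
have [N tmN] := transient_mass_lt1.
pose c := \big[Order.max/0]_q transient_mass N q.
have tm_le_c q : transient_mass N q <= c by apply: le_bigmax.
have c_ge0 : 0 <= c := le_trans (transient_mass_ge0 N k) (tm_le_c k).
have c_lt1 : c < 1 by apply: bigmax_lt.
have tm_geometric m q : transient_mass (m * N) q <= c ^+ m.
  elim: m q => [|m IH] q; first by rewrite mul0n expr0 transient_mass_le1.
  rewrite mulSn transient_mass_add exprSr.
  apply: (@le_trans _ _ (\sum_(l | ~~ A l) Wp N q l * c ^+ m)).
    by apply: ler_sum => l _; apply: ler_wpM2l; [apply: mxpow_ge0 | apply: IH].
  rewrite -mulr_suml mulrC; apply: ler_wpM2l; [exact: exprn_ge0 | exact: tm_le_c].
have tm_cvg : cvgn (fun t => transient_mass t k).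
  apply: nonincreasing_is_cvgn; first exact: transient_mass_nonincr.
  by exists 0 => _ [t _ <-]; apply: transient_mass_ge0.
suff <- : limn (fun t => transient_mass t k) = 0 by [].
apply/eqP; rewrite eq_le; apply/andP; split; last first.
  by apply: limr_ge => //; near=> t; apply: transient_mass_ge0.
have cpow_cvg0 : (fun m => c ^+ m) @ \oo --> (0 : R).
  by apply: cvg_expr; rewrite ger0_norm.
rewrite -(cvg_lim _ cpow_cvg0) //; apply: limr_ge; first by apply/cvg_ex; exists 0.
near=> m; apply: le_trans (tm_geometric m k).
exact: nonincreasing_cvgn_ge (transient_mass_nonincr k) tm_cvg _.
Unshelve. all: by end_near.
Qed.

Lemma mxpow_transient_cvg0 k l : ~~ A l -> (fun t => Wp t k l) @ \oo --> 0.
Proof.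
move=> Al; apply: (squeeze_cvgr _ (cvg_cst 0) (transient_mass_cvg0 k)).
near=> t; rewrite mxpow_ge0 /= /transient_mass (bigD1 l Al) /= lerDl.
by apply: sumr_ge0 => q _; apply: mxpow_ge0.
Unshelve. all: by end_near.
Qed.

Local Notation Wlim k l := (limn (fun t => Wp t k l)).

Lemma mxpow_cvg k l : (fun t => Wp t k l) @ \oo --> Wlim k l.
Proof.
have [Al|Al] := boolP (A l).
  apply: nondecreasing_is_cvgn; first exact: mxpow_absorbing_nondecr.
  by exists 1 => _ [t _ <-]; apply: mxpow_le1.
by rewrite (cvg_lim _ (mxpow_transient_cvg0 k Al)) //; apply: mxpow_transient_cvg0.
Qed.

Lemma mxpow_lim_ge0 k l : 0 <= Wlim k l.
Proof.
by apply: limr_ge; [apply: mxpow_cvg | near=> t; apply: mxpow_ge0].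
Unshelve. all: by end_near.
Qed.

Lemma mxpow_lim_row_sum1 k : \sum_l Wlim k l = 1.
Proof.
have sum_cvg : (fun t => \sum_l Wp t k l) @ \oo --> \sum_l Wlim k l.
  by apply: cvg_big => //; [apply: add_continuous | move=> l _; apply: mxpow_cvg].
have row_sum1 : (fun t => \sum_l Wp t k l) = fun=> 1.
  by apply/funext => t; apply: mxpow_row_sum1.
rewrite row_sum1 in sum_cvg.
by rewrite -(cvg_lim _ sum_cvg) ?lim_cst.
Qed.

Lemma mxpow_lim_gt0 k l : 0 < Wlim k l <-> A l /\ connect (graph_of W) k l.
Proof.
split=> [lim_gt0|[Al /connect_mxpow_gt0 [t klt]]]; last first.
  apply: lt_le_trans klt _; apply: nondecreasing_cvgn_le.
    exact: mxpow_absorbing_nondecr.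
  exact: mxpow_cvg.
have [Al|Al] := boolP (A l); last first.
  by move: lim_gt0; rewrite (cvg_lim _ (mxpow_transient_cvg0 k Al)) ?ltxx.
split=> //; apply/connect_mxpow_gt0; apply: contrapT => /forallNP kl0.
suff kl_eq0 : (fun t => Wp t k l) = fun=> 0 by rewrite kl_eq0 lim_cst ?ltxx in lim_gt0.
apply/funext => t; apply/eqP; rewrite eq_le mxpow_ge0 andbT leNgt.
exact/negP/kl0.
Qed.

End MatrixPowers.

Section WeightedSquares.
Variables (R : realFieldType) (I : finType) (h : I -> R).
Hypotheses (h_ge0 : forall k, 0 <= h k) (h_sum1 : \sum_k h k = 1).

Lemma prob_le1 k : h k <= 1.
Proof.
rewrite -h_sum1 (bigD1 k) //= lerDl.
by apply: sumr_ge0 => q _; apply: h_ge0.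
Qed.

Lemma point_massP (Q : I -> Prop) :
  (forall k, 0 < h k -> h k = 1 /\ Q k) <->
  exists j, [/\ 0 < h j, forall k, 0 < h k -> k = j & Q j].
Proof.
split=> [massP|[j [hj_gt0 supp_j Qj]] k hk_gt0]; last first.
  rewrite (supp_j k hk_gt0) -h_sum1 (bigD1 j) //= big1 ?addr0 // => q qj.
  apply/eqP; rewrite eq_le h_ge0 andbT leNgt; apply: contraNN qj => hq_gt0.
  exact/eqP/supp_j.
have [j hj_gt0] : exists j, 0 < h j by apply: psumr_gt0_exists; rewrite h_sum1.
have [hj1 Qj] := massP j hj_gt0.
exists j; split=> // k hk_gt0; apply/eqP; apply: contraT => kj.
have [hk1 _] := massP k hk_gt0.
have : \sum_(q | (q != k) && (q != j)) h q >= 0 by apply: sumr_ge0.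
have := h_sum1; rewrite (bigD1 k) //= (bigD1 j) /= ?hk1 ?hj1; first lra.
by rewrite eq_sym.
Qed.

Variables (s : I -> R) (m : R).
Hypotheses (s_gt0 : forall k, 0 < s k) (s_le : forall k, s k <= m).

Lemma sqr_weight_le k : h k ^+ 2 * s k <= h k * m.
Proof.
rewrite expr2 -mulrA ler_wpM2l //.
by have := prob_le1 k; have := s_le k; have := s_gt0 k; nra.
Qed.

Lemma sum_sqr_weighted_le : \sum_k h k ^+ 2 * s k <= m.
Proof.
rewrite -[m]mul1r -h_sum1 mulr_suml.
by apply: ler_sum => k _; apply: sqr_weight_le.
Qed.

Lemma sum_sqr_weighted_eqP :
  \sum_k h k ^+ 2 * s k = m <-> forall k, 0 < h k -> h k = 1 /\ s k = m.
Proof.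
split=> [sum_eq k hk_gt0|massP].
  have gap_eq0 : \sum_k (h k * m - h k ^+ 2 * s k) = 0.
    by rewrite sumrB -mulr_suml h_sum1 mul1r sum_eq subrr.
  have gap_ge0 q : true -> 0 <= h q * m - h q ^+ 2 * s q.
    by rewrite subr_ge0 sqr_weight_le.
  have /eqP := psumr_eq0P gap_ge0 gap_eq0 (i := k) isT.
  rewrite subr_eq0 expr2 -mulrA => /eqP /(mulfI (lt0r_neq0 hk_gt0)) m_eq.
  by have := prob_le1 k; have := s_le k; have := s_gt0 k; split; nra.
rewrite -[RHS]mul1r -h_sum1 mulr_suml; apply: eq_bigr => k _.
have [hk_gt0|] := ltP 0 (h k); first by have [-> ->] := massP k hk_gt0; rewrite expr1n.
by rewrite le_eqVlt ltNge h_ge0 orbF => /eqP ->; rewrite expr0n !mul0r.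
Qed.

End WeightedSquares.

Section InfluenceMatrix.
Variables (R : realType) (n : nat) (P : 'M[R]_n) (zz : 'I_n -> R).

Lemma Wm_entry k l : Wm P zz k l = (1 - zz k) * P k l + (k == l)%:R * zz k.
Proof.
rewrite /Wm mulmxBl mul1mx /diagz mul_diag_mx !mxE.
by case: eqP => _; rewrite ?mulr1n ?mulr0n ?mul1r ?mul0r ?addr0 mulrBl mul1r.
Qed.

Lemma Wm_absorbing a l : zz a == 1 -> Wm P zz a l = (a == l)%:R.
Proof. by move/eqP=> za1; rewrite Wm_entry za1 subrr mul0r add0r mulr1. Qed.

Hypotheses (hP : row_stochastic P) (zz_01 : forall k, 0 <= zz k <= 1).

Lemma Wm_ge0 k l : 0 <= Wm P zz k l.
Proof.
have [P_ge0 _] := hP; have /andP [zk_ge0 zk_le1] := zz_01 k.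
by rewrite Wm_entry addr_ge0 ?mulr_ge0 ?subr_ge0.
Qed.

Lemma Wm_row_sum1 k : \sum_l Wm P zz k l = 1.
Proof.
have [_ P_sum1] := hP; under eq_bigr do rewrite Wm_entry.
rewrite big_split /= -mulr_sumr P_sum1 mulr1 (bigD1 k) //= eqxx mul1r.
by rewrite big1 ?addr0 ?subrK // => l /negPf; rewrite eq_sym => ->; rewrite mul0r.
Qed.

Lemma Wm_edge k l : zz k != 1 -> graph_of P k l -> graph_of (Wm P zz) k l.
Proof.
move=> zk1 Pkl; have /andP [zk_ge0 zk_le1] := zz_01 k.
rewrite /graph_of Wm_entry ltr_pwDl ?mulr_ge0 ?ler0n // mulr_gt0 //.
by rewrite subr_gt0 lt_neqAle zk1.
Qed.

Hypothesis hPi : irreducible P.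
Hypothesis zz_absorbing : exists a, zz a = 1.

Lemma Wm_reach_absorbing k : exists2 a, zz a == 1 & connect (graph_of (Wm P zz)) k a.
Proof.
have [a0 za0] := zz_absorbing; have /connectP [p kp a0E] := hPi k a0.
rewrite {}a0E in za0; elim: p k kp za0 => [|q p IH] k /=.
  by exists k; rewrite ?za0.
have [zk1 _ _|zk1 /andP [kq qp] zp] := eqVneq (zz k) 1; first by exists k; rewrite ?zk1.
have [a za qa] := IH q qp zp; exists a => //.
exact: connect_trans (connect1 (Wm_edge zk1 kq)) qa.
Qed.

Let Hm_lim k l : Hm P zz k l = limn (fun t => mxpow (Wm P zz) t k l).
Proof. by rewrite mxE. Qed.

Lemma Hm_ge0 k l : 0 <= Hm P zz k l.
Proof.
by rewrite Hm_lim (mxpow_lim_ge0 Wm_ge0 Wm_row_sum1 Wm_absorbing Wm_reach_absorbing).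
Qed.

Lemma Hm_row_sum1 k : \sum_l Hm P zz k l = 1.
Proof.
under eq_bigr do rewrite Hm_lim.
exact: (mxpow_lim_row_sum1 Wm_ge0 Wm_row_sum1 Wm_absorbing Wm_reach_absorbing).
Qed.

Lemma Hm_gt0 k l : 0 < Hm P zz k l <-> zz l = 1 /\ connect (graph_of (Wm P zz)) k l.
Proof.
rewrite Hm_lim (mxpow_lim_gt0 Wm_ge0 Wm_row_sum1 Wm_absorbing Wm_reach_absorbing).
by split=> -[zl kl]; split=> //; apply/eqP.
Qed.

End InfluenceMatrix.

Lemma upsilon_upd1 (R : realType) (n : nat) (P : 'M[R]_n) s2 i (z : 'I_n -> R) :
  upsilon P s2 i (upd z i 1) = s2 i.
Proof.
have Hm_row k : Hm P (upd z i 1) i k = (i == k)%:R.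
  rewrite mxE (_ : (fun t => _) = fun=> (i == k)%:R) ?lim_cst //.
  apply/funext => t; apply: (mxpow_absorbing (@Wm_absorbing _ _ P _)).
  by rewrite /upd eqxx.
rewrite /upsilon (bigD1 i) //= Hm_row eqxx expr1n mul1r big1 ?addr0 // => k ki.
by rewrite Hm_row eq_sym (negPf ki) expr0n mul0r.
Qed.

Lemma in_best_resp1 (R : realType) (n : nat) (P : 'M[R]_n) s2 i z :
  1 \in best_resp P s2 i z <->
  forall y, 0 <= y <= 1 -> upsilon P s2 i (upd z i 1) <= upsilon P s2 i (upd z i y).
Proof.
rewrite in_setE; split=> [[] //|U1_min]; split=> //.
by rewrite ler01 lexx.
Qed.

Lemma best_resp_itvP (R : realType) (n : nat) (P : 'M[R]_n) s2 i z :
  (forall x, 0 <= x <= 1 -> upsilon P s2 i (upd z i x) <= upsilon P s2 i (upd z i 1)) ->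
  best_resp P s2 i z = `[0, 1] <-> 1 \in best_resp P s2 i z.
Proof.
move=> U_le; split=> [->|/in_best_resp1 U1_min]; first by rewrite in_setE /= in_itv /= ler01 lexx.
apply/seteqP; split=> [x [] //|x]; rewrite /= in_itv /= => x01.
by split=> // y y01; apply: le_trans (U_le x x01) (U1_min y y01).
Qed.

Section InteriorResponses.
Variables (R : realType) (n : nat) (P : 'M[R]_n) (s2 : 'I_n -> R) (i : 'I_n) (z : 'I_n -> R).
Hypotheses (hP : row_stochastic P) (hPi : irreducible P).
Hypotheses (s2_gt0 : forall j, 0 < s2 j) (s2_le : forall j, s2 j <= s2 i).
Hypotheses (hz : forall j, j != i -> 0 <= z j <= 1) (hS : exists j, Sset z i j).

Definition reaches_unique_max (x : R) : Prop :=
  exists j, [/\ Sset z i j, connect (graph_of (Wm P (upd z i x))) i j,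
                (forall j', Sset z i j' -> connect (graph_of (Wm P (upd z i x))) i j' -> j' = j)
              & s2 i = s2 j].

Variables (x : R) (hx : 0 <= x < 1).

Let upd_01 k : 0 <= upd z i x k <= 1.
Proof.
rewrite /upd; case: eqP => [_|/eqP ki]; last exact: hz.
by case/andP: hx => -> /ltW.
Qed.

Lemma upd_eq1 k : upd z i x k = 1 <-> Sset z i k.
Proof.
rewrite /upd /Sset; case: eqP => [->|_]; last by split=> [|[]].
by split=> [x1|[] //]; move: hx; rewrite x1 ltxx andbF.
Qed.

Let upd_absorbing : exists a, upd z i x a = 1.
Proof. by have [a /upd_eq1] := hS; exists a. Qed.

Let H k := Hm P (upd z i x) i k.
Let H_ge0 k : 0 <= H k := Hm_ge0 hP upd_01 hPi upd_absorbing i k.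
Let H_sum1 : \sum_k H k = 1 := Hm_row_sum1 hP upd_01 hPi upd_absorbing i.

Lemma upsilon_upd_le : upsilon P s2 i (upd z i x) <= s2 i.
Proof. exact: sum_sqr_weighted_le. Qed.

Lemma upsilon_upd_eqP : upsilon P s2 i (upd z i x) = s2 i <-> reaches_unique_max x.
Proof.
have H_gt0 k : 0 < H k <-> Sset z i k /\ connect (graph_of (Wm P (upd z i x))) i k.
  by rewrite /H Hm_gt0 // upd_eq1.
rewrite (sum_sqr_weighted_eqP H_ge0 H_sum1 s2_gt0 s2_le) point_massP //.
split=> [[j [Hj_gt0 supp_j s2j]]|[j [Sj ij supp_j s2j]]]; exists j.
  have [Sj ij] := (H_gt0 j).1 Hj_gt0.
  by split=> // j' Sj' ij'; apply/supp_j/(H_gt0 j').2.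
split=> [|k /H_gt0 [Sk ik]|]; [exact/(H_gt0 j).2 | exact: supp_j | exact: esym].
Qed.

End InteriorResponses.

Theorem proposition5 (R : realType) (n : nat) (hn : (2 <= n)%N)
  (P : 'M[R]_n) (s2 : 'I_n -> R)
  (hPs : row_stochastic P) (hPi : irreducible P) (hPa : aperiodic P)
  (hs2 : forall j, 0 < s2 j)
  (i : 'I_n) (hmax : forall j, s2 j <= s2 i)
  (z : 'I_n -> R) (hz : forall j, j != i -> 0 <= z j <= 1)
  (hS : exists j, Sset z i j) :
  [/\ (1 \in best_resp P s2 i z <-> best_resp P s2 i z = `[0, 1]),
      (best_resp P s2 i z = `[0, 1] <->
        (forall zi : R, 0 <= zi < 1 ->
          exists j, [/\ Sset z i j, connect (graph_of (Wm P (upd z i zi))) i j,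
                        (forall j', Sset z i j' ->
                           connect (graph_of (Wm P (upd z i zi))) i j' -> j' = j)
                      & s2 i = s2 j]))
    & ((forall zi : R, 0 <= zi < 1 ->
          exists j, [/\ Sset z i j, connect (graph_of (Wm P (upd z i zi))) i j,
                        (forall j', Sset z i j' ->
                           connect (graph_of (Wm P (upd z i zi))) i j' -> j' = j)
                      & s2 i = s2 j]) <-> 1 \in best_resp P s2 i z)].
Proof.
have U1 := upsilon_upd1 P s2 i z.
have U_lt1_le x (hx : 0 <= x < 1) := upsilon_upd_le hPs hPi hs2 hmax hz hS hx.
have U_lt1_eqP x (hx : 0 <= x < 1) := upsilon_upd_eqP hPs hPi hs2 hmax hz hS hx.
have U_le x : 0 <= x <= 1 -> upsilon P s2 i (upd z i x) <= upsilon P s2 i (upd z i 1).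
  case/andP=> x_ge0; rewrite le_eqVlt => /predU1P [->//|x_lt1].
  by rewrite U1 U_lt1_le // x_ge0.
have ii_i := best_resp_itvP U_le.
have iii_i : (forall x, 0 <= x < 1 -> reaches_unique_max P s2 i z x) <->
             1 \in best_resp P s2 i z.
  rewrite in_best_resp1 U1; split=> [iii y /andP [y_ge0]|i1 x x01].
    rewrite le_eqVlt => /predU1P [->|y_lt1]; first by rewrite U1.
    have y01 : 0 <= y < 1 by rewrite y_ge0.
    by rewrite ((U_lt1_eqP y y01).2 (iii y y01)).
  apply/(U_lt1_eqP x x01)/eqP; rewrite eq_le U_lt1_le //=; apply: i1.
  by case/andP: x01 => -> /ltW.
split; [exact: iff_sym ii_i | exact: iff_trans ii_i (iff_sym iii_i) | exact: iii_i].
Qed.
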